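(* Let $W$ be a real symmetric $n\times n$ matrix with non-negative entries and zero diagonal, let $\lambda\ge 0$, and suppose $I+\lambda W = R^T R$ for some real matrix $R$ all of whose entries are non-negative. Then for every $z\in\mathbb{C}^n$ the function $x\mapsto D_{\lambda,W}(x;z)$ is convex on $\mathbb{C}^n$ (viewed as $\mathbb{R}^{2n}$).
   Context: For $x\in\mathbb{C}^n$, $|x|$ denotes the vector of magnitudes $(|x_1|,\dots,|x_n|)$ and $\|x\|_1=\sum_i |x_i|$. The penalty is $P_W(x)=\|x\|_1+\frac12\sum_{i,j} w_{i,j}|x_i x_j| = \|x\|_1+\frac12|x|^T W|x|$. For $\lambda\ge0$ and $z\in\mathbb{C}^n$, $D_{\lambda,W}(x;z)=\frac12\|z-x\|_2^2+\lambda P_W(x)$. *)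

(* C^n is modelled as row vectors 'rV[C]_n over an
   arbitrary numClosedFieldType C (an algebraically closed field with
   conjugation, order and norm, e.g. the complex numbers). *)
From HB Require Import structures.
From mathcomp Require Import all_boot all_order all_algebra.
Set Implicit Arguments. Unset Strict Implicit. Unset Printing Implicit Defensive.
Import Order.TTheory GRing.Theory Num.Theory.
Local Open Scope ring_scope.

Definition PW (C : numClosedFieldType) (n : nat) (W : 'M[C]_n) (x : 'rV[C]_n) : C :=
  \sum_(i < n) `|x 0 i| + 2^-1 * \sum_(i < n) \sum_(j < n) W i j * `|x 0 i * x 0 j|.

Definition Dfun (C : numClosedFieldType) (n : nat) (lam : C) (W : 'M[C]_n)
  (x z : 'rV[C]_n) : C :=
  2^-1 * \sum_(i < n) `|z 0 i - x 0 i| ^+ 2 + lam * PW W x.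

(* Convexity on C^n viewed as R^{2n}: convex combinations with real
   coefficients t in [0,1]. *)
Definition convex_on_Cn (C : numClosedFieldType) (n : nat) (f : 'rV[C]_n -> C) : Prop :=
  forall (x y : 'rV[C]_n) (t : C), 0 <= t -> t <= 1 ->
    f (t *: x + (1 - t) *: y) <= t * f x + (1 - t) * f y.

From HB Require Import structures.
From mathcomp Require Import all_boot all_order all_algebra.
From mathcomp Require Import ring.
Import Order.TTheory GRing.Theory Num.Theory.
Local Open Scope ring_scope.

(* Since I + lam W = R^T R with R >= 0, the Gram identity gives
   ||x||^2 + lam |x|^T W |x| = ||R |x| ||^2 = sum_k (sum_j R_kj |x_j|)^2.
   Hence
     D(x; z) = 1/2 sum_i (|z_i - x_i|^2 - |x_i|^2) + 1/2 sum_k (sum_j R_kj |x_j|)^2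
               + lam ||x||_1,
   where the first sum is real-affine in x, each sum_j R_kj |x_j| is a nonnegative
   convex function (so its square is convex), and ||x||_1 is convex. *)

Section ConvexOnCn.
Context {C : numClosedFieldType} {n : nat}.
Implicit Types (f g : 'rV[C]_n -> C) (x y z : 'rV[C]_n) (t : C).

Lemma convex_on_eq f g : f =1 g -> convex_on_Cn f -> convex_on_Cn g.
Proof. by move=> fg cvx_f x y t t0 t1; rewrite -!fg; apply: cvx_f. Qed.

Lemma convex_onD f g :
  convex_on_Cn f -> convex_on_Cn g -> convex_on_Cn (fun v => f v + g v).
Proof.
move=> cvx_f cvx_g x y t t0 t1.
apply: le_trans (lerD (cvx_f x y t t0 t1) (cvx_g x y t t0 t1)) _.
by rewrite !mulrDr addrACA.
Qed.

Lemma convex_onZ c f : 0 <= c -> convex_on_Cn f -> convex_on_Cn (fun v => c * f v).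
Proof.
move=> c0 cvx_f x y t t0 t1.
apply: le_trans (ler_wpM2l c0 (cvx_f x y t t0 t1)) _.
by rewrite mulrDr !mulrA ![c * _]mulrC.
Qed.

Lemma convex_on_sum (I : finType) (F : I -> 'rV[C]_n -> C) :
  (forall i, convex_on_Cn (F i)) -> convex_on_Cn (fun v => \sum_i F i v).
Proof.
move=> cvx_F x y t t0 t1.
apply: le_trans (ler_sum _ (fun i _ => cvx_F i x y t t0 t1)) _.
by rewrite big_split /= !mulr_sumr.
Qed.

Lemma convex_on_norm_coord (i : 'I_n) : convex_on_Cn (fun v : 'rV[C]_n => `|v 0 i|).
Proof.
move=> x y t t0 t1; rewrite !mxE; apply: le_trans (ler_normD _ _) _.
by rewrite !normrM (ger0_norm t0) (@ger0_norm _ (1 - t)) ?subr_ge0.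
Qed.

(* |z_i - v_i|^2 - |v_i|^2 = |z_i|^2 - 2 Re(z_i^* v_i) is real-affine in v. *)
Lemma convex_on_sqr_distB_sqr_norm z (i : 'I_n) :
  convex_on_Cn (fun v : 'rV[C]_n => `|z 0 i - v 0 i| ^+ 2 - `|v 0 i| ^+ 2).
Proof.
move=> x y t t0 _; rewrite !mxE !normCK !rmorphB !rmorphD !rmorphM /= !rmorphB /= rmorph1.
by rewrite (geC0_conj t0) le_eqVlt; apply/orP; left; apply/eqP; ring.
Qed.

Lemma convex_on_sqr f :
  (forall v, 0 <= f v) -> convex_on_Cn f -> convex_on_Cn (fun v => f v ^+ 2).
Proof.
move=> f_ge0 cvx_f x y t t0 t1.
have t1_ge0 : 0 <= 1 - t by rewrite subr_ge0.
have comb_ge0 : 0 <= t * f x + (1 - t) * f y by rewrite addr_ge0 ?mulr_ge0.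
apply: le_trans (lerXn2r 2 _ _ (cvx_f x y t t0 t1)) _; rewrite ?nnegrE //.
have [a_ge0 b_ge0] := (f_ge0 x, f_ge0 y).
set a := f x in a_ge0 *; set b := f y in b_ge0 *.
have -> : t * a ^+ 2 + (1 - t) * b ^+ 2
          = (t * a + (1 - t) * b) ^+ 2 + t * (1 - t) * (a - b) ^+ 2 by ring.
have : a - b \is Num.real by rewrite realB // ger0_real.
rewrite realEsqr => sqr_ge0; rewrite lerDl.
by apply: mulr_ge0 => //; apply: mulr_ge0.
Qed.

End ConvexOnCn.

Lemma sum_sqr_row_comb (C : comPzRingType) (m n : nat) (R : 'M[C]_(m, n)) (a : 'I_n -> C) :
  \sum_(k < m) (\sum_(j < n) R k j * a j) ^+ 2
  = \sum_(i < n) \sum_(j < n) (R^T *m R) i j * (a i * a j).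
Proof.
under [RHS]eq_bigr do under eq_bigr do rewrite mxE mulr_suml.
under [LHS]eq_bigr => k _ do rewrite expr2 mulr_suml.
under [LHS]eq_bigr => k _ do under eq_bigr => i _ do rewrite mulr_sumr.
rewrite exchange_big /=; apply: eq_bigr => i _.
rewrite exchange_big /=; apply: eq_bigr => j _.
by apply: eq_bigr => k _; rewrite mxE; ring.
Qed.

Lemma Dfun_gram_split {C : numClosedFieldType} {n m : nat} {W : 'M[C]_n} {lam : C}
    {R : 'M[C]_(m, n)} (z x : 'rV[C]_n) :
  1%:M + lam *: W = R^T *m R ->
  Dfun lam W x z
  = 2^-1 * \sum_(i < n) (`|z 0 i - x 0 i| ^+ 2 - `|x 0 i| ^+ 2)
    + 2^-1 * \sum_(k < m) (\sum_(j < n) R k j * `|x 0 j|) ^+ 2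
    + lam * \sum_(i < n) `|x 0 i|.
Proof.
move=> gram.
have gram_form : \sum_(i < n) \sum_(j < n) (R^T *m R) i j * (`|x 0 i| * `|x 0 j|)
    = \sum_(i < n) `|x 0 i| ^+ 2 + lam * \sum_(i < n) \sum_(j < n) W i j * `|x 0 i * x 0 j|.
  rewrite -gram mulr_sumr -big_split /=; apply: eq_bigr => i _.
  rewrite mulr_sumr (bigD1 i) //= [in RHS](bigD1 i) //= addrA !mxE eqxx.
  congr (_ + _); first by rewrite normrM /=; ring.
  by apply: eq_bigr => j ji; rewrite !mxE eq_sym (negPf ji) normrM /=; ring.
by rewrite sum_sqr_row_comb gram_form /Dfun /PW sumrB; ring.
Qed.

Theorem mainTheorem2 (C : numClosedFieldType) (n m : nat) (W : 'M[C]_n) (lam : C)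
  (R : 'M[C]_(m, n)) :
  W^T = W ->
  (forall i j, 0 <= W i j) ->
  (forall i, W i i = 0) ->
  0 <= lam ->
  (forall i j, 0 <= R i j) ->
  1%:M + lam *: W = R^T *m R ->
  forall z : 'rV[C]_n, convex_on_Cn (fun x => Dfun lam W x z).
Proof.
move=> _ _ _ lam_ge0 R_ge0 gram z.
have half_ge0 : 0 <= 2^-1 :> C by rewrite invr_ge0 ler0n.
apply: convex_on_eq (fun x => esym (Dfun_gram_split z x gram)) _.
apply: convex_onD; first apply: convex_onD.
- apply: convex_onZ => //; apply: convex_on_sum => i.
  exact: convex_on_sqr_distB_sqr_norm.
- apply: convex_onZ => //; apply: convex_on_sum => k; apply: convex_on_sqr.
    by move=> v; apply: sumr_ge0 => j _; rewrite mulr_ge0.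
  apply: convex_on_sum => j; apply: convex_onZ => //.
  exact: convex_on_norm_coord.
- by apply: convex_onZ => //; apply: convex_on_sum => i; apply: convex_on_norm_coord.
Qed.
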